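(* Let $N\in\mathbb{Z}^+$ and $\boldsymbol{\mu}\in\mathbb{R}_+^N$ with $0\le\mu[n]\le1$ for all $n$, and suppose $t=\sum_{n=1}^N\mu[n]\ge1$ is not an integer. Define $m_1[n]=\big[\mu[n]-(t-\lfloor t\rfloor)\big]^+$, $m_2[n]=\big[\mu[n]-(\lceil t\rceil-t)\big]^+$ and $$r=\frac{\lfloor t\rfloor(\lceil t\rceil-t)-\sum_{n=1}^N m_1[n]}{t-\sum_{n=1}^N m_1[n]-\sum_{n=1}^N m_2[n]}.$$ Then $r$ is well defined (the denominator is strictly positive) and $0\le r<1$.
   Context: $[x]^+=\max(x,0)$. *)

From mathcomp Require Import all_boot all_order all_algebra.
From mathcomp Require Import all_classical all_reals.
Set Implicit Arguments. Unset Strict Implicit. Unset Printing Implicit Defensive.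
Import Order.TTheory GRing.Theory Num.Theory.
Local Open Scope ring_scope.

Definition pospart (R : realDomainType) (x : R) : R := Num.max x 0.

(** Write [S(θ) = Σ [μ n - θ]^+] for [0 <= θ <= 1] and let [k] be the number
    of [n] with [μ n > θ]. The [k] nonzero terms are each at most [1 - θ] and
    sum to at most [t - k θ], so [S(θ) <= min (k (1 - θ), t - k θ)]; as [k] is
    an integer, comparing it with any integer [j] gives
    [S(θ) <= max (j (1 - θ), t - (j + 1) θ)]. For [f = t - ⌊t⌋ ∈ (0,1)] and
    [j = ⌊t⌋] this yields [Σ m1 <= ⌊t⌋ (1 - f)] and [Σ m2 < ⌈t⌉ f], two bounds
    that add up to exactly [t]; hence [0 < den], [0 <= r] and [r < 1]. *)

From mathcomp Require Import all_boot all_order all_algebra.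
From mathcomp Require Import all_classical all_reals.
From mathcomp Require Import lra.

Set Implicit Arguments.
Unset Strict Implicit.
Unset Printing Implicit Defensive.
Import Order.TTheory GRing.Theory Num.Theory.
Local Open Scope ring_scope.

Section SumPospartSub.

Variables (R : realFieldType) (I : finType) (mu : I -> R).
Hypothesis mu01 : forall i, 0 <= mu i <= 1.

Lemma pospart_sub_le_indicator (i : I) (theta : R) :
  0 <= theta ->
  pospart (mu i - theta) <= ((theta < mu i)%R : nat)%:R * (1 - theta) /\
  pospart (mu i - theta) <= mu i - ((theta < mu i)%R : nat)%:R * theta.
Proof.
move=> theta_ge0; have /andP [mu_ge0 mu_le1] := mu01 i; rewrite /pospart.
by case: ltrP => lt_theta_mu /=; [rewrite max_l | rewrite max_r];
  rewrite ?mul1r ?mul0r; try split; lra.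
Qed.

Lemma sum_pospart_sub_le_count (theta : R) : 0 <= theta ->
  exists k : nat,
    \sum_i pospart (mu i - theta) <= k%:R * (1 - theta) /\
    \sum_i pospart (mu i - theta) <= \sum_i mu i - k%:R * theta.
Proof.
move=> theta_ge0; exists (\sum_i ((theta < mu i)%R : nat))%N.
rewrite natr_sum !mulr_suml -sumrB.
by split; apply: ler_sum => i _; case: (pospart_sub_le_indicator i theta_ge0).
Qed.

Lemma sum_pospart_sub_le (theta : R) (j : int) : 0 <= theta <= 1 ->
  \sum_i pospart (mu i - theta) <=
    Num.max (j%:~R * (1 - theta)) (\sum_i mu i - (j%:~R + 1) * theta).
Proof.
case/andP=> theta_ge0 theta_le1.
have [k [le_k1 le_k2]] := sum_pospart_sub_le_count theta_ge0.
rewrite le_max; case: (lerP (k%:Z) j) => [le_kj | lt_jk].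
  apply/orP; left; apply: (le_trans le_k1); rewrite ler_wpM2r ?subr_ge0 //.
  by rewrite -(ler_int R) in le_kj.
apply/orP; right; apply: (le_trans le_k2); rewrite lerB // ler_wpM2r //.
by rewrite -lezD1 -(ler_int R) intrD in lt_jk.
Qed.

End SumPospartSub.

Lemma floor_lt_nint (R : archiRealDomainType) (x : R) :
  x \isn't a Num.int -> (Num.floor x)%:~R < x.
Proof. by rewrite intrEfloor lt_neqAle floor_le andbT. Qed.

Theorem lemma5 (R : realType) (N : nat) (hN : (0 < N)%N) (mu : 'I_N -> R)
  (hmu : forall n, 0 <= mu n <= 1)
  (ht1 : 1 <= \sum_(n < N) mu n)
  (htint : \sum_(n < N) mu n \isn't a Num.int) :
  let t := \sum_(n < N) mu n in
  let fl : R := (Num.floor t)%:~R in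
  let cl : R := (Num.ceil t)%:~R in
  let m1 := fun n => pospart (mu n - (t - fl)) in
  let m2 := fun n => pospart (mu n - (cl - t)) in
  let den := t - \sum_(n < N) m1 n - \sum_(n < N) m2 n in
  let r := (fl * (cl - t) - \sum_(n < N) m1 n) / den in
  0 < den /\ 0 <= r /\ r < 1.
Proof.
move=> t fl cl m1 m2 den r.
have cl_def : cl = fl + 1 by rewrite /cl ceil_floor htint intrD.
have fl_lt_t : fl < t by exact: floor_lt_nint.
have t_lt_cl : t < fl + 1.
  by rewrite /fl -[1]/(1%:~R) -intrD; case/andP: (floor_itv t).
have frac_01 : 0 <= t - fl <= 1 by apply/andP; split; lra.
have cofrac_01 : 0 <= cl - t <= 1 by rewrite cl_def; apply/andP; split; lra.
have S1_bound : \sum_(n < N) m1 n <= fl * (fl + 1 - t).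
  have := sum_pospart_sub_le hmu (Num.floor t) frac_01.
  by rewrite le_max /m1 -/fl -/t; case/orP; nra.
have S2_bound : \sum_(n < N) m2 n < (fl + 1) * (t - fl).
  have := sum_pospart_sub_le hmu (Num.floor t) cofrac_01.
  by rewrite le_max /m2 -/fl -/t cl_def; case/orP; nra.
have den_gt0 : 0 < den by rewrite /den; lra.
split => //; split.
  by apply: divr_ge0; [rewrite cl_def; lra | exact: ltW].
by rewrite /r ltr_pdivrMr // mul1r /den cl_def; lra.
Qed.
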